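(* Let $V\subset\mathbb{R}^n$ be finite, let $T\subset\mathbb{R}^n$ be $V$-closed, and let $x$ be an exposed point of $C=\operatorname{cl}\operatorname{conv}T$. Then $x\in\operatorname{cl}T$.
   Context: A set $T\subset\mathbb{R}^n$ is $V$-closed if for every $t\in T$ and every $v\in V$, at least one of $t+v$, $t-v$ lies in $T$. $\operatorname{cl}$ denotes topological closure and $\operatorname{conv}$ the convex hull. A boundary point $x$ of a convex set $C$ is exposed if there is a supporting hyperplane $H$ of $C$ with $H\cap C=\{x\}$. *)

(* R^n is 'rV[R]_n for R : realType, with the
   canonical (product/normed) topology on matrices. *)
From HB Require Import structures.
From mathcomp Require Import all_boot all_order all_algebra.
From mathcomp Require Import all_classical all_reals all_analysis.
Set Implicit Arguments. Unset Strict Implicit. Unset Printing Implicit Defensive.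
Import Order.TTheory GRing.Theory Num.Theory.
Import numFieldNormedType.Exports.
Local Open Scope classical_set_scope.
Local Open Scope ring_scope.

Definition dotv (R : realType) (n : nat) (a y : 'rV[R]_n) : R :=
  \sum_(i < n) a ord0 i * y ord0 i.

Definition V_closed (R : realType) (n : nat) (V T : set 'rV[R]_n) : Prop :=
  forall t v, T t -> V v -> T (t + v) \/ T (t - v).

Definition conv_hull (R : realType) (n : nat) (T : set 'rV[R]_n) : set 'rV[R]_n :=
  [set y | exists (k : nat) (l : 'I_k -> R) (p : 'I_k -> 'rV[R]_n),
     (forall i, 0 <= l i) /\ \sum_(i < k) l i = 1 /\
     (forall i, T (p i)) /\ y = \sum_(i < k) l i *: p i].

Definition supporting_hyperplane (R : realType) (n : nat)
  (C : set 'rV[R]_n) (a : 'rV[R]_n) (b : R) : Prop :=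
  a != 0 /\ (forall y, C y -> dotv a y <= b) /\ (exists y, C y /\ dotv a y = b).

Definition exposed_point (R : realType) (n : nat) (C : set 'rV[R]_n)
  (x : 'rV[R]_n) : Prop :=
  C x /\ ~ (interior C) x /\
  exists (a : 'rV[R]_n) (b : R), supporting_hyperplane C a b /\
    [set y | C y /\ dotv a y = b] = [set x].

(* If no point of T came within e of the exposed point x, then for every t in T
   the point of the segment [x, t] at distance e from x lies in C = cl conv T.
   On this compact cap of C, which misses x, the exposing functional a stays
   below its maximum b on C by some margin d > 0; as a is affine along [x, t]
   with value b at x, the same margin holds at t.  So the closed half-space
   a <= b - d contains T, hence C, hence x: a contradiction. *)
From HB Require Import structures.
From mathcomp Require Import all_boot all_order all_algebra.
From mathcomp Require Import all_classical all_reals all_analysis.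
From mathcomp Require Import lra.
Import Order.TTheory GRing.Theory Num.Theory.
Import numFieldNormedType.Exports.
Local Open Scope classical_set_scope.
Local Open Scope ring_scope.

Lemma closure_preimage_continuous {T U : topologicalType} (f : T -> U)
    (A : set T) (B : set U) :
  continuous f -> A `<=` f @^-1` B -> closure A `<=` f @^-1` closure B.
Proof.
move=> f_cont AB; have /closure_id -> : closed (f @^-1` closure B).
  by apply: preimage_closed => [y _|]; [exact: f_cont | exact: closed_closure].
by apply: closureS => y /AB /=; apply: subset_closure.
Qed.

Lemma compact_max_gap {T : topologicalType} {R : realType} (f : T -> R)
    (K : set T) (b : R) :
  compact K -> {within K, continuous f} -> (forall y, K y -> f y < b) ->
  exists2 d, 0 < d & forall y, K y -> f y <= b - d.
Proof.
move=> K_compact f_cont f_lt.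
have [->|/set0P K0] := eqVneq K set0; first by exists 1.
have [c /set_mem Kc c_max] := compact_EVT_max K0 K_compact f_cont.
exists (b - f c); first by rewrite subr_gt0 f_lt.
by move=> y Ky; rewrite opprB addrC subrK c_max // inE.
Qed.

Section dot_product.
Context {R : realType} {n : nat}.
Implicit Types (a u v : 'rV[R]_n).

Lemma dotvD a u v : dotv a (u + v) = dotv a u + dotv a v.
Proof. by rewrite /dotv -big_split; apply: eq_bigr => i _; rewrite mxE mulrDr. Qed.

Lemma dotvZ a s u : dotv a (s *: u) = s * dotv a u.
Proof. by rewrite /dotv mulr_sumr; apply: eq_bigr => i _; rewrite mxE mulrCA. Qed.

Lemma dotv_sum a k (F : 'I_k -> 'rV[R]_n) :
  dotv a (\sum_(i < k) F i) = \sum_(i < k) dotv a (F i).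
Proof.
rewrite /dotv exchange_big /=; apply: eq_bigr => i _.
by rewrite summxE mulr_sumr.
Qed.

Lemma dotv_continuous a : continuous (dotv a).
Proof.
apply: continuous_big => [|i _]; first exact: add_continuous.
by move=> u; apply: continuousM; [exact: cst_continuous | exact: coord_continuous].
Qed.

Lemma closed_halfspace a c : closed [set y | dotv a y <= c].
Proof.
apply: (@preimage_closed _ _ (dotv a) [set r | r <= c]); last exact: closed_le.
by move=> y _; apply: dotv_continuous.
Qed.

End dot_product.

Section convex_hull.
Context {R : realType} {n : nat} {T : set 'rV[R]_n}.

Lemma subset_conv_hull : T `<=` conv_hull T.
Proof.
move=> t Tt; exists 1%N, (fun=> 1), (fun=> t).
by rewrite !big_ord1 scale1r.
Qed.

Lemma conv_hull_convex u1 u2 s : 0 <= s <= 1 ->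
  conv_hull T u1 -> conv_hull T u2 -> conv_hull T (s *: u1 + (1 - s) *: u2).
Proof.
move=> /andP[s0 s1] [k1 [l1 [p1 [l1_ge0 [l1_sum [p1T ->]]]]]].
move=> [k2 [l2 [p2 [l2_ge0 [l2_sum [p2T ->]]]]]].
pose l i := match fintype.split i with
  | inl j => s * l1 j | inr j => (1 - s) * l2 j end.
pose p i := match fintype.split i with inl j => p1 j | inr j => p2 j end.
have splitL (j : 'I_k1) : fintype.split (lshift k2 j) = inl j := unsplitK (inl j).
have splitR (j : 'I_k2) : fintype.split (rshift k1 j) = inr j := unsplitK (inr j).
exists (k1 + k2)%N, l, p; split; last split; last split.
- by move=> i; rewrite /l; case: (fintype.split i) => j; apply: mulr_ge0 => //; lra.
- rewrite big_split_ord /l /=; under eq_bigr do rewrite splitL.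
  under [X in _ + X]eq_bigr do rewrite splitR.
  by rewrite -!mulr_sumr l1_sum l2_sum !mulr1 subrKC.
- by move=> i; rewrite /p; case: (fintype.split i).
- rewrite big_split_ord /l /p /=; under [X in _ = X + _]eq_bigr do rewrite splitL.
  under [X in _ = _ + X]eq_bigr do rewrite splitR.
  by rewrite !scaler_sumr; congr (_ + _); apply: eq_bigr => i _; rewrite scalerA.
Qed.

Lemma closure_conv_hull_segment t y s : 0 <= s <= 1 -> T t ->
  closure (conv_hull T) y -> closure (conv_hull T) (s *: t + (1 - s) *: y).
Proof.
move=> s01 Tt; pose f y := s *: t + (1 - s) *: y.
have f_cont : continuous f.
  move=> z; apply: (@continuousD _ _ _ (cst (s *: t)) ( *:%R (1 - s))).
    exact: cst_continuous.
  exact: scaler_continuous.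
have f_conv : conv_hull T `<=` f @^-1` conv_hull T.
  by move=> u Cu; apply: conv_hull_convex => //; exact: subset_conv_hull.
exact: closure_preimage_continuous f_cont f_conv y.
Qed.

Lemma closure_conv_hull_halfspace a c : (forall t, T t -> dotv a t <= c) ->
  closure (conv_hull T) `<=` [set y | dotv a y <= c].
Proof.
move=> T_le; have /closure_id -> := closed_halfspace a c.
apply: closureS => _ [k [l [p [l_ge0 [l_sum [pT ->]]]]]] /=.
rewrite dotv_sum (eq_bigr (fun i => l i * dotv a (p i))) => [|i _]; last exact: dotvZ.
apply: le_trans (_ : \sum_(i < k) l i * c <= _).
  by apply: ler_sum => i _; apply: ler_wpM2l => //; exact: T_le.
by rewrite -mulr_suml l_sum mul1r.
Qed.

End convex_hull.

Lemma closed_sphere {K : realFieldType} {V : normedModType K} (x : V) (e : K) :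
  closed [set y | `|y - x| = e].
Proof.
rewrite -[X in closed X]/((fun y => `|y - x|) @^-1` [set r | r = e]).
apply: preimage_closed => [y _|]; last exact: closed_eq.
by apply: cvg_norm; apply: cvgB; [exact: cvg_id | exact: cvg_cst].
Qed.

Lemma compact_sphere_cap {R : realType} {n : nat} {C : set 'rV[R]_n} x e :
  closed C -> compact (C `&` [set y | `|y - x| = e]).
Proof.
move=> C_closed; apply: bounded_closed_compact; last exact: closedI (closed_sphere x e).
set K := _ `&` _.
change (\forall M \near +oo, globally K [set y | `|y| <= M]).
near=> M => y [_ /= yx_e] /=; apply: le_trans (_ : `|y - x| + `|x| <= M).
  by rewrite -{1}(subrK x y) ler_normD.
by rewrite yx_e; near: M; apply: nbhs_pinfty_ge; exact: num_real.
Unshelve. all: by end_near.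
Qed.

Section exposed_point.
Context {R : realType} {n : nat} (T : set 'rV[R]_n).
Local Notation C := (closure (conv_hull T)).

Lemma far_from_exposed_point_gap x a b e : C x -> dotv a x = b ->
  (forall y, C y -> dotv a y <= b) -> (forall y, C y -> dotv a y = b -> y = x) ->
  0 < e -> (forall t, T t -> e <= `|t - x|) ->
  exists2 d, 0 < d & forall t, T t -> dotv a t <= b - d.
Proof.
move=> Cx ax_b C_le face_x e_gt0 T_far.
have [|y [Cy /= yx_e]|d d_gt0 cap_le] := @compact_max_gap _ _ (dotv a) _ b
    (compact_sphere_cap x e (@closed_closure _ (conv_hull T))).
- by apply: continuous_subspaceT => y; exact: dotv_continuous.
- rewrite lt_neqAle C_le // andbT; apply: contraTneq e_gt0 => /(face_x _ Cy) yx.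
  by rewrite -yx_e yx subrr normr0 ltxx.
exists d => // t Tt; have tx_ge := T_far t Tt.
have tx_gt0 : 0 < `|t - x| by apply: lt_le_trans tx_ge.
pose s := e / `|t - x|.
have s_gt0 : 0 < s by apply: divr_gt0.
have s_le1 : s <= 1 by rewrite ler_pdivrMr // mul1r.
pose z := s *: t + (1 - s) *: x.
have Cz : C z by apply: closure_conv_hull_segment => //; rewrite ltW.
have zx_e : `|z - x| = e.
  rewrite (_ : z - x = s *: (t - x)); last first.
    by rewrite /z scalerBr scalerBl scale1r addrCA addrAC subrr add0r.
  by rewrite normrZ gtr0_norm // divfK // gt_eqF.
have := cap_le z (conj Cz zx_e).
rewrite /z dotvD !dotvZ ax_b => z_le.
have /C_le : C t by exact/subset_closure/subset_conv_hull.
nra.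
Qed.

Lemma exposed_point_closure_conv_hull x : exposed_point C x -> closure T x.
Proof.
move=> [Cx [_ [a [b [[_ [C_le _]] face]]]]].
have [_ ax_b] : [set y | C y /\ dotv a y = b] x by rewrite face.
have face_x y : C y -> dotv a y = b -> y = x.
  by move=> Cy ay_b; have : [set y | C y /\ dotv a y = b] y by []; rewrite face.
move=> B /nbhs_ballP[e e_gt0 eB]; apply: contrapT => TB0.
have T_far t : T t -> e <= `|t - x|.
  move=> Tt; rewrite leNgt; apply/negP => tx_lt; apply: TB0; exists t.
  by split => //; apply: eB; rewrite -ball_normE /= distrC.
have [d d_gt0 T_le] := far_from_exposed_point_gap x a b e Cx ax_b C_le face_x e_gt0 T_far.
have /closure_conv_hull_halfspace/(_ x Cx) := T_le; rewrite /= ax_b.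
lra.
Qed.

End exposed_point.

Theorem lemma2p2 (R : realType) (n : nat) (V T : set 'rV[R]_n)
  (x : 'rV[R]_n) :
  finite_set V -> V_closed V T ->
  exposed_point (closure (conv_hull T)) x ->
  closure T x.
Proof. by move=> _ _; exact: exposed_point_closure_conv_hull. Qed.
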